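(* Let $\mathbf{k}$ be an algebraically closed field of characteristic zero, $\mathcal{A}=\mathbf{k}[x_1,\ldots,x_n]$, $\mathcal{V}=\bigoplus_{i=1}^n\mathcal{A}\frac{\partial}{\partial x_i}$, $\mathcal{L}_+\subset\mathcal{V}$ the subalgebra of vector fields vanishing at the origin, and $\mathcal{D}$ the Weyl algebra. Let $\varphi:\mathcal{A}\# U(\mathcal{V})\to\mathcal{D}\otimes U(\mathcal{L}_+)$ be the algebra homomorphism which is the natural embedding $f\mapsto f\otimes1$ on $\mathcal{A}$ and satisfies $\varphi(x^k\frac{\partial}{\partial x_p})=x^k\frac{\partial}{\partial x_p}\otimes 1+\sum_{0<m\leq k}\binom{k}{m}x^{k-m}\otimes x^m\frac{\partial}{\partial x_p}$, and let $\psi:\mathcal{D}\otimes U(\mathcal{L}_+)\to\mathcal{A}\# U(\mathcal{V})$ be the algebra homomorphism with $\psi(x^r\partial^s\otimes 1)=x^r\#(\frac{\partial}{\partial x_1})^{s_1}\cdots(\frac{\partial}{\partial x_n})^{s_n}$ and $\psi(1\otimes x^m\frac{\partial}{\partial x_p})=\sum_{0\leq k\leq m}(-1)^{m-k}\binom{m}{k}x^{m-k}\# x^k\frac{\partial}{\partial x_p}$ for $m\neq 0$. Then $\psi\circ\varphi$ and $\varphi\circ\psi$ are the identity maps, i.e., $\varphi$ and $\psi$ are mutually inverse.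
   Context: Multi-index notation: $x^k=x_1^{k_1}\cdots x_n^{k_n}$, $\partial^s=(\partial/\partial x_1)^{s_1}\cdots(\partial/\partial x_n)^{s_n}$; $m\le k$ componentwise, $0<m\le k$ means additionally $m\ne0$; $\binom{k}{m}=\prod_i\binom{k_i}{m_i}$; $(-1)^{s}=(-1)^{s_1+\cdots+s_n}$. The smash product $\mathcal{A}\# U(\mathcal{V})$ is $\mathcal{A}\otimes U(\mathcal{V})$ with product $(f\# u)(g\# v)=\sum_i f\,u_i^{(1)}(g)\# u_i^{(2)}v$, $\Delta(u)=\sum_i u_i^{(1)}\otimes u_i^{(2)}$ the coproduct; in particular $(1\#\eta)(f\#1)=f\#\eta+\eta(f)\#1$. *)

From HB Require Import structures.
From mathcomp Require Import all_boot all_order all_algebra.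
From mathcomp Require Import mpoly.
Set Implicit Arguments. Unset Strict Implicit. Unset Printing Implicit Defensive.
Import Order.TTheory GRing.Theory Num.Theory.
Local Open Scope ring_scope.

(* Polynomial vector fields  V = (+)_i A d/dx_i, as n-tuples of polynomials. *)
Definition VF (F : fieldType) (n : nat) := {ffun 'I_n -> {mpoly F[n]}}.

Definition vapp (F : fieldType) n (e : VF F n) (f : {mpoly F[n]}) : {mpoly F[n]} :=
  \sum_(i < n) e i * mderiv i f.

Definition vbr (F : fieldType) n (e x : VF F n) : VF F n :=
  [ffun i => vapp e (x i) - vapp x (e i)].

Definition vanish0 (F : fieldType) n (e : VF F n) : Prop :=
  forall i, (e i).@[fun _ => 0] = 0.

Definition vfm (F : fieldType) n (k : 'X_{1..n}) (p : 'I_n) : VF F n :=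
  [ffun i => if i == p then 'X_[k] else 0].
Arguments vfm {F n} k p.

Definition is_alg_hom (F : fieldType) (A B : algType F) (h : A -> B) : Prop :=
  [/\ h 1 = 1, forall x y, h (x * y) = h x * h y
    & forall (a : F) x y, h (a *: x + y) = a *: h x + h y].

Definition is_lin (F : fieldType) (U B : lmodType F) (g : U -> B) : Prop :=
  forall (a : F) x y, g (a *: x + y) = a *: g x + g y.

(* ---- the smash product A # U(V), characterized by its universal property:
   generated by an algebra map iA : A -> S and a Lie map iV : V -> S with
   (1#eta)(f#1) = f#eta + eta(f)#1, and universal among such data. ---- *)
Definition smash_rel (F : fieldType) n (R : algType F)
    (fA : {mpoly F[n]} -> R) (gV : VF F n -> R) : Prop :=
  [/\ is_alg_hom fA, is_lin gV,
      forall e x, gV (vbr e x) = gV e * gV x - gV x * gV e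
    & forall e f, gV e * fA f = fA f * gV e + fA (vapp e f)].

Definition is_smash_product (F : fieldType) n (S : algType F)
    (iA : {mpoly F[n]} -> S) (iV : VF F n -> S) : Prop :=
  smash_rel iA iV /\
  forall (R : algType F) (fA : {mpoly F[n]} -> R) (gV : VF F n -> R),
    smash_rel fA gV ->
    (exists h : S -> R, [/\ is_alg_hom h, forall f, h (iA f) = fA f
                                        & forall e, h (iV e) = gV e]) /\
    (forall h1 h2 : S -> R, is_alg_hom h1 -> is_alg_hom h2 ->
       (forall f, h1 (iA f) = fA f) -> (forall e, h1 (iV e) = gV e) ->
       (forall f, h2 (iA f) = fA f) -> (forall e, h2 (iV e) = gV e) ->
       h1 =1 h2).

(* ---- D (x) U(L_+): D the Weyl algebra on x_i, d_i; characterized by the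
   universal property of the tensor product of the Weyl algebra (given by its
   presentation) with U(L_+).  X i = x_i (x) 1, P i = d/dx_i (x) 1,
   jL e = 1 (x) e for e in L_+ (values of jL outside L_+ are irrelevant). ---- *)
Definition weylU_rel (F : fieldType) n (R : algType F)
    (X P : 'I_n -> R) (gL : VF F n -> R) : Prop :=
  [/\ (forall i j, X i * X j = X j * X i) /\
      (forall i j, P i * P j = P j * P i),
      forall i j, P i * X j - X j * P i = (i == j)%:R,
      forall (a : F) e x, vanish0 e -> vanish0 x ->
        gL (a *: e + x) = a *: gL e + gL x,
      forall e x, vanish0 e -> vanish0 x ->
        gL (vbr e x) = gL e * gL x - gL x * gL e
    & forall e i, vanish0 e -> gL e * X i = X i * gL e /\ gL e * P i = P i * gL e].

Definition is_weyl_tensor_UL (F : fieldType) n (T : algType F)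
    (X P : 'I_n -> T) (jL : VF F n -> T) : Prop :=
  weylU_rel X P jL /\
  forall (R : algType F) (Xr Pr : 'I_n -> R) (gL : VF F n -> R),
    weylU_rel Xr Pr gL ->
    (exists h : T -> R, [/\ is_alg_hom h, forall i, h (X i) = Xr i,
                          forall i, h (P i) = Pr i
                        & forall e, vanish0 e -> h (jL e) = gL e]) /\
    (forall h1 h2 : T -> R, is_alg_hom h1 -> is_alg_hom h2 ->
       (forall i, h1 (X i) = Xr i) -> (forall i, h1 (P i) = Pr i) ->
       (forall e, vanish0 e -> h1 (jL e) = gL e) ->
       (forall i, h2 (X i) = Xr i) -> (forall i, h2 (P i) = Pr i) ->
       (forall e, vanish0 e -> h2 (jL e) = gL e) ->
       h1 =1 h2).

Definition Xmon (R : ringType) n (Y : 'I_n -> R) (k : 'X_{1..n}) : R :=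
  \prod_(i < n) Y i ^+ k i.

Definition embA (F : fieldType) n (R : algType F) (Y : 'I_n -> R)
    (f : {mpoly F[n]}) : R :=
  \sum_(m <- msupp f) f@_m *: Xmon Y m.

Definition mbin n (k m : 'X_{1..n}) : nat := \prod_(i < n) 'C(k i, m i).

(* Both composites are algebra endomorphisms, so by the uniqueness clauses of
   the two universal properties it suffices that they fix the generators:
   iA x^m and iV (x^k d/dx_p) of A # U(V), and x_i, d/dx_i, 1 (x) x^m d/dx_p of
   D (x) U(L_+).  On the vector fields, phi and psi are triangular transforms
   over the multi-indices below k, with coefficients C(k,m), resp.
   (-1)^|m-j| C(m,j), twisted by multiplication with monomials x^(k-m).  Since
   the monomials multiply additively in the exponent, the twists compose, and
   the coefficient kernels are mutually inverse because they factor over the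
   coordinates into one-variable binomial inversions. *)

From HB Require Import structures.
From mathcomp Require Import all_boot all_order all_algebra.
From mathcomp Require Import mpoly.
From mathcomp Require Import ring zify.
Import GRing.Theory.
Set Implicit Arguments. Unset Strict Implicit. Unset Printing Implicit Defensive.
Local Open Scope ring_scope.

Lemma bin_mul_bin b a s :
  ('C(b, s + a) * 'C(s + a, a) = 'C(b, a) * 'C(b - a, s))%N.
Proof.
have [le_ab|lt_ba] := leqP a b; last first.
  by rewrite (@bin_small b (s + a)) ?(@bin_small b a) //; lia.
have [le_sb|lt_bs] := leqP (s + a) b; last first.
  by rewrite (@bin_small b (s + a)) ?(@bin_small (b - a) s) ?muln0 //; lia.
have le_s : (s <= b - a)%N by lia.
apply/eqP; rewrite -(@eqn_pmul2r (a`! * s`! * (b - a - s)`!)); last first.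
  by rewrite !muln_gt0 !fact_gt0.
apply/eqP; transitivity b`!.
  have -> : (b - a - s = b - (s + a))%N by lia.
  by rewrite -(bin_fact le_sb) -(bin_fact (leq_addl s a)) addnK; ring.
by rewrite -(bin_fact le_ab) -(bin_fact le_s); ring.
Qed.

Section SignedBinomialSums.
Variable R : pzRingType.

Lemma sum_signed_bin (m : nat) :
  \sum_(s < m.+1) (-1) ^+ s * 'C(m, s)%:R = (m == 0)%:R :> R.
Proof.
have := exprD1n (-1 : R) m; rewrite addNr expr0n => ->.
by apply: eq_bigr => s _; rewrite mulr_natr.
Qed.

Lemma sum_signed_bin_mul a b : (a <= b)%N ->
  \sum_(t < b.+1) (-1) ^+ (t - a) * ('C(b, t) * 'C(t, a))%:R = (a == b)%:R :> R.
Proof.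
move=> le_ab.
rewrite -(big_mkord xpredT (fun t => (-1) ^+ (t - a) * ('C(b, t) * 'C(t, a))%:R)).
rewrite (@big_cat_nat _ _ _ a) //=; last by lia.
rewrite big_nat big1 ?add0r => [|t /andP[_ lt_ta]]; last first.
  by rewrite (bin_small lt_ta) muln0 mulr0.
rewrite -{1}[a]add0n big_addn subSn // big_mkord.
under eq_bigr do rewrite addnK bin_mul_bin natrM mulr_natl mulrnAr.
rewrite sumrMnl sum_signed_bin subn_eq0.
have [->|ne_ab] := eqVneq a b; first by rewrite leqnn binn.
by rewrite leqNgt ltn_neqAle ne_ab le_ab mul0rn.
Qed.

Lemma sum_bin_mul_signed a b : (a <= b)%N ->
  \sum_(t < b.+1) (-1) ^+ (b - t) * ('C(b, t) * 'C(t, a))%:R = (a == b)%:R :> R.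
Proof.
move=> le_ab.
rewrite (eq_bigr (fun t : 'I_b.+1 =>
  (-1) ^+ (b - a) * ((-1) ^+ (t - a) * ('C(b, t) * 'C(t, a))%:R))) => [|t _].
  rewrite -mulr_sumr sum_signed_bin_mul //.
  by have [->|_] := eqVneq a b; rewrite ?subnn ?expr0 ?mul1r ?mulr0.
have [lt_ta|le_at] := ltnP t a; first by rewrite (bin_small lt_ta) muln0 !mulr0.
have [lt_bt|le_tb] := ltnP b t; first by rewrite (bin_small lt_bt) mul0n !mulr0.
rewrite mulrA -exprD; congr (_ * _); rewrite -signr_odd -[RHS]signr_odd.
have -> : (b - a + (t - a) = b - t + (t - a).*2)%N by rewrite -addnn; lia.
by rewrite oddD odd_double addbF.
Qed.
End SignedBinomialSums.

Section BoundedMultinomialSums.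
Variable n : nat.
Implicit Types (k m : 'X_{1..n}) (d : nat).

Lemma mdeg_le m k : (m <= k)%MM -> (mdeg m <= mdeg k)%N.
Proof. by move=> le_mk; rewrite -(submK le_mk) mdegD leq_addl. Qed.

Lemma mnm_le_mdeg k i : (k i <= mdeg k)%N.
Proof. by rewrite mdegE (bigD1 i) //= leq_addr. Qed.

Lemma lem_0m k : (0 <= k)%MM.
Proof. by apply/mnm_lepP => i; rewrite mnm0E. Qed.

Lemma lem_m0 m : (m <= 0)%MM = (m == 0%MM).
Proof.
apply/mnm_lepP/eqP => [m0|->] //; apply/mnmP => i.
by have := m0 i; rewrite !mnm0E leqn0 => /eqP.
Qed.

Lemma mbin0 k : mbin k 0%MM = 1%N.
Proof. by rewrite /mbin big1 // => i _; rewrite mnm0E bin0. Qed.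

Lemma submm k : (k - k)%MM = 0%MM.
Proof. by rewrite -[X in (X - _)%MM]add0m addmK. Qed.

Definition mnm_of_ffun N (f : {ffun 'I_n -> 'I_N}) : 'X_{1..n} :=
  [multinom (f i : nat) | i < n].

Lemma mnm_of_ffunE N (f : {ffun 'I_n -> 'I_N}) i : mnm_of_ffun f i = f i.
Proof. exact: mnmE. Qed.

Lemma big_bmnm_le_ffun (M : nmodType) d k (G : 'X_{1..n} -> M) : (mdeg k <= d)%N ->
  \sum_(m : 'X_{1..n < d.+1} | (m <= k)%MM) G m =
  \sum_(f : {ffun 'I_n -> 'I_(mdeg k).+1} | (mnm_of_ffun f <= k)%MM) G (mnm_of_ffun f).
Proof.
move=> le_kd.
pose to_bmnm (f : {ffun 'I_n -> 'I_(mdeg k).+1}) : 'X_{1..n < d.+1} :=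
  insubd bm0 (mnm_of_ffun f).
pose to_ffun (m : 'X_{1..n < d.+1}) : {ffun 'I_n -> 'I_(mdeg k).+1} :=
  [ffun i => inord (m i)].
have to_bmnmK f : (mnm_of_ffun f <= k)%MM -> to_bmnm f = mnm_of_ffun f :> 'X_{1..n}.
  move=> le_fk; rewrite val_insubd (leq_ltn_trans (mdeg_le le_fk)) //.
have to_ffunK (m : 'X_{1..n < d.+1}) : (m <= k)%MM -> mnm_of_ffun (to_ffun m) = m.
  move/mnm_lepP=> le_mk; apply/mnmP => i; rewrite mnm_of_ffunE ffunE inordK // ltnS.
  exact: leq_trans (le_mk i) (mnm_le_mdeg k i).
rewrite (reindex_onto to_bmnm to_ffun) => [|m le_mk]; last first.
  by apply: val_inj; rewrite /= to_bmnmK to_ffunK.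
rewrite (eq_bigl (fun f => mnm_of_ffun f <= k)%MM) => [|f]; last first.
  have [le_fk|lt_fk] := boolP (mnm_of_ffun f <= k)%MM; last first.
    by apply/negbTE; apply: contra lt_fk => /andP[le_bk /eqP <-]; rewrite to_ffunK.
  rewrite to_bmnmK // le_fk; apply/eqP/ffunP => i; apply: val_inj.
  by rewrite ffunE /= to_bmnmK // mnm_of_ffunE inordK.
by apply: eq_bigr => f le_fk; rewrite to_bmnmK.
Qed.

Lemma big_bmnm_le_bound (M : nmodType) d1 d2 k (G : 'X_{1..n} -> M) :
  (mdeg k <= d1)%N -> (mdeg k <= d2)%N ->
  \sum_(m : 'X_{1..n < d1.+1} | (m <= k)%MM) G m =
  \sum_(m : 'X_{1..n < d2.+1} | (m <= k)%MM) G m.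
Proof. by move=> le_kd1 le_kd2; rewrite !big_bmnm_le_ffun. Qed.

Lemma big_bmnm_le_prod (R : comPzSemiRingType) d k (G : 'I_n -> nat -> R) :
  (mdeg k <= d)%N ->
  \sum_(m : 'X_{1..n < d.+1} | (m <= k)%MM) \prod_i G i (m i) =
  \prod_i \sum_(t < (k i).+1) G i t.
Proof.
move=> le_kd; rewrite (big_bmnm_le_ffun (fun m => \prod_i G i (m i))) //.
rewrite (eq_bigr (fun f : {ffun 'I_n -> 'I_(mdeg k).+1} => \prod_i G i (f i)))
  => [|f _]; last first.
  by apply: eq_bigr => i _; rewrite mnm_of_ffunE.
rewrite (eq_bigl (fun f => f \in family (fun i (t : 'I_(mdeg k).+1) => t <= k i)%N));
  last by move=> f; apply/mnm_lepP/familyP => le_fk i; have := le_fk i; rewrite mnm_of_ffunE.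
rewrite -(bigA_distr_big_dep _ (fun i (t : 'I_(mdeg k).+1) => G i t)).
apply: eq_bigr => i _.
by rewrite (big_ord_widen_cond (mdeg k).+1 xpredT (G i)) ?ltnS ?mnm_le_mdeg.
Qed.

Lemma big_bmnm_le_delta (R : pzRingType) (M : lmodType R) d k (Y : 'X_{1..n} -> M) :
  (mdeg k <= d)%N ->
  \sum_(m : 'X_{1..n < d.+1} | (m <= k)%MM) (bmnm m == k)%:R *: Y m = Y k.
Proof.
move=> le_kd; pose kb : 'X_{1..n < d.+1} := BMultinom (le_kd : (mdeg k < d.+1)%N).
rewrite (bigD1 kb) ?lepm_refl //= eqxx scale1r big1 ?addr0 // => m /andP[_ ne_mk].
by move: ne_mk; rewrite -val_eqE /= => /negbTE->; rewrite scale0r.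
Qed.

Lemma mbin_eq0 k m : ~~ (m <= k)%MM -> mbin k m = 0%N.
Proof.
case/forallPn=> i; rewrite -ltnNge => lt_km.
by rewrite /mbin (bigD1 i) //= bin_small // mul0n.
Qed.

Lemma exprN1_mdeg (R : pzRingType) m : (-1) ^+ mdeg m = \prod_i (-1) ^+ m i :> R.
Proof. by rewrite mdegE (big_morph _ (exprD _) (expr0 _)). Qed.

Definition mnm_inverse (R : pzSemiRingType) (a b : 'X_{1..n} -> 'X_{1..n} -> R) :=
  forall k g, (g <= k)%MM ->
    \sum_(f : 'X_{1..n < (mdeg k).+1} | (f <= k)%MM && (g <= f)%MM) a k f * b f g
      = (g == k)%:R.

Lemma sum_prod_delta (R : comPzRingType) (h : nat -> nat -> nat -> R) k g :
  (forall a b, (a <= b)%N -> \sum_(t < b.+1) h b t a = (a == b)%:R) ->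
  (g <= k)%MM ->
  \sum_(f : 'X_{1..n < (mdeg k).+1} | (f <= k)%MM) \prod_i h (k i) (f i) (g i) =
  (g == k)%:R.
Proof.
move=> h_delta /mnm_lepP le_gk.
rewrite (big_bmnm_le_prod (fun i t => h (k i) t (g i))) //.
under eq_bigr do rewrite h_delta //.
have [->|ne_gk] := eqVneq g k; first by rewrite big1 // => i _; rewrite eqxx.
have /forallPn[i ne_i] : ~~ [forall i, g i == k i].
  by apply: contra ne_gk => /forallP eq_gk; apply/eqP/mnmP => i; apply/eqP.
by rewrite (bigD1 i) //= (negbTE ne_i) mul0r.
Qed.

Lemma mnm_inverse_prod (R : comPzRingType) (a b : 'X_{1..n} -> 'X_{1..n} -> R)
    (h : nat -> nat -> nat -> R) :
  (forall a b, (a <= b)%N -> \sum_(t < b.+1) h b t a = (a == b)%:R) ->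
  (forall k f g, a k f * b f g = \prod_i h (k i) (f i) (g i)) ->
  (forall f g, ~~ (g <= f)%MM -> b f g = 0) ->
  mnm_inverse a b.
Proof.
move=> h_delta abE b_eq0 k g le_gk; rewrite -(sum_prod_delta h_delta le_gk).
under [RHS]eq_bigr do rewrite -abE.
rewrite [RHS](bigID (fun f : 'X_{1..n < (mdeg k).+1} => g <= f)%MM) /=.
by rewrite [X in _ = _ + X]big1 ?addr0 // => f /andP[_ /b_eq0->]; rewrite mulr0.
Qed.

Lemma mnm_inverse_bin_signed (R : comPzRingType) :
  mnm_inverse (fun k f => (mbin k f)%:R : R)
              (fun f g => (-1) ^+ mdeg (f - g)%MM * (mbin f g)%:R).
Proof.
apply: (mnm_inverse_prod (h := fun b t a => (-1) ^+ (t - a) * ('C(b, t) * 'C(t, a))%:R)).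
- exact: sum_signed_bin_mul.
- move=> k f g; rewrite exprN1_mdeg /mbin !natr_prod -!big_split /=.
  by apply: eq_bigr => i _; rewrite mnmBE natrM; ring.
- by move=> f g /mbin_eq0->; rewrite mulr0.
Qed.

Lemma mnm_inverse_signed_bin (R : comPzRingType) :
  mnm_inverse (fun k f => (-1) ^+ mdeg (k - f)%MM * (mbin k f)%:R : R)
              (fun f g => (mbin f g)%:R).
Proof.
apply: (mnm_inverse_prod (h := fun b t a => (-1) ^+ (b - t) * ('C(b, t) * 'C(t, a))%:R)).
- exact: sum_bin_mul_signed.
- move=> k f g; rewrite exprN1_mdeg /mbin !natr_prod -!big_split /=.
  by apply: eq_bigr => i _; rewrite mnmBE natrM; ring.
- by move=> f g /mbin_eq0->.
Qed.

End BoundedMultinomialSums.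

Section ShiftedInversion.
Variables (R : comPzRingType) (A : algType R) (n : nat) (x : 'X_{1..n} -> A).
Hypotheses (x0 : x 0%MM = 1) (xD : forall a b, x a * x b = x (a + b)%MM).

Lemma shifted_inversion (a b : 'X_{1..n} -> 'X_{1..n} -> R) (Z : 'X_{1..n} -> A) k :
  mnm_inverse a b ->
  \sum_(f : 'X_{1..n < (mdeg k).+1} | (f <= k)%MM)
     a k f *: (x (k - f)%MM *
       \sum_(g : 'X_{1..n < (mdeg f).+1} | (g <= f)%MM) b f g *: (x (f - g)%MM * Z g))
  = Z k.
Proof.
move=> ab.
have shift (f : 'X_{1..n}) : (f <= k)%MM ->
    x (k - f)%MM * \sum_(g : 'X_{1..n < (mdeg f).+1} | (g <= f)%MM)
                      b f g *: (x (f - g)%MM * Z g) =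
    \sum_(g : 'X_{1..n < (mdeg k).+1} | (g <= f)%MM) b f g *: (x (k - g)%MM * Z g).
  move=> le_fk; rewrite mulr_sumr -(big_bmnm_le_bound
    (fun g => b f g *: (x (k - g)%MM * Z g)) (leqnn (mdeg f)) (mdeg_le le_fk)).
  by apply: eq_bigr => g le_gf; rewrite -scalerAr mulrA xD addmBA // submK.
under eq_bigr => f le_fk do rewrite shift // scaler_sumr.
rewrite (exchange_big_dep (fun g : 'X_{1..n < (mdeg k).+1} => g <= k)%MM) /=;
  last by move=> f g le_fk le_gf; apply: lepm_trans le_gf le_fk.
under eq_bigr => g le_gk do rewrite (eq_bigr _ (fun f _ => scalerA _ _ _)) -scaler_suml ab //.
by rewrite (big_bmnm_le_delta (fun g => x (k - g)%MM * Z g)) // submm x0 mul1r.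
Qed.

End ShiftedInversion.

Section LinearMaps.
Variables (F : fieldType) (U B : lmodType F) (g : U -> B).
Hypothesis g_lin : is_lin g.

Lemma is_lin0 : g 0 = 0.
Proof.
have := g_lin 1 0 0; rewrite !scale1r !addr0 => g00.
by apply/(addrI (g 0)); rewrite addr0 -g00.
Qed.

Lemma is_linD x y : g (x + y) = g x + g y.
Proof. by have := g_lin 1 x y; rewrite !scale1r. Qed.

Lemma is_linZ a x : g (a *: x) = a *: g x.
Proof. by rewrite -[a *: x]addr0 g_lin is_lin0 addr0. Qed.

Lemma is_lin_sum (I : Type) (r : seq I) (Q : pred I) (G : I -> U) :
  g (\sum_(i <- r | Q i) G i) = \sum_(i <- r | Q i) g (G i).
Proof. exact: (big_morph g is_linD is_lin0). Qed.

End LinearMaps.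

Section AlgebraMorphisms.
Variables (F : fieldType) (A B C : algType F) (h : A -> B).
Hypothesis h_hom : is_alg_hom h.

Lemma alg_hom_lin : is_lin h. Proof. by case: h_hom. Qed.
Lemma alg_hom1 : h 1 = 1. Proof. by case: h_hom. Qed.
Lemma alg_homM x y : h (x * y) = h x * h y. Proof. by case: h_hom. Qed.

Lemma alg_hom_comp (h' : B -> C) : is_alg_hom h' -> is_alg_hom (h' \o h).
Proof.
case: h_hom => h1 hM hL [h'1 h'M h'L].
by split=> [|x y|a x y] /=; rewrite ?h1 ?h'1 ?hM ?h'M ?hL ?h'L.
Qed.

End AlgebraMorphisms.

Lemma alg_hom_id (F : fieldType) (A : algType F) : is_alg_hom (@id A).
Proof. by []. Qed.

Section Monomials.
Variables (R : nzRingType) (n : nat) (Y : 'I_n -> R).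

Lemma Xmon0 : Xmon Y 0%MM = 1.
Proof. by rewrite /Xmon big1 // => i _; rewrite mnm0E. Qed.

Lemma XmonU p : Xmon Y U_(p)%MM = Y p.
Proof.
rewrite /Xmon (eq_bigr (fun i => if i == p then Y p else 1)) => [|i _].
  by rewrite -big_mkcond big_pred1_eq.
by rewrite mnm1E eq_sym; case: eqP => [->|_]; rewrite ?expr1 ?expr0.
Qed.

End Monomials.

Lemma prod_expr0n (R : comPzRingType) n (m : 'X_{1..n}) :
  \prod_(i < n) (0 : R) ^+ m i = (m == 0%MM)%:R.
Proof.
have [->|ne_m0] := eqVneq m 0%MM; first by rewrite big1 // => i _; rewrite mnm0E.
have /forallPn[i ne_i] : ~~ [forall i, m i == 0%N].
  by apply: contra ne_m0 => /forallP m0; apply/eqP/mnmP => i; rewrite mnm0E; apply/eqP.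
by rewrite (bigD1 i) //= expr0n (negbTE ne_i) mul0r.
Qed.

Lemma embA_X (F : fieldType) n (R : algType F) (Y : 'I_n -> R) m :
  embA Y 'X_[m] = Xmon Y m.
Proof. by rewrite /embA msuppX big_seq1 mcoeffX eqxx scale1r. Qed.

Section VectorFields.
Variables (F : fieldType) (n : nat).
Implicit Types (e x : VF F n) (m : 'X_{1..n}).

Lemma meval0_mcoeff (q : {mpoly F[n]}) : q.@[fun _ => 0] = q@_0%MM.
Proof.
rewrite mevalE [in RHS](mpolyE q) (big_morph _ (mcoeffD 0%MM) (mcoeff0 _ 0%MM)).
by apply: eq_bigr => m _; rewrite mcoeffZ mcoeffX prod_expr0n eq_sym.
Qed.

Lemma vanish0_0 : vanish0 (0 : VF F n).
Proof. by move=> i; rewrite ffunE meval0. Qed.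

Lemma vanish0_lin a e x : vanish0 e -> vanish0 x -> vanish0 (a *: e + x).
Proof. by move=> e0 x0 i; rewrite !ffunE mevalD mevalZ e0 x0 mulr0 addr0. Qed.

Lemma vanish0_vfm m p : m != 0%MM -> vanish0 (vfm m p : VF F n).
Proof.
move=> ne_m0 i; rewrite ffunE; case: eqP => _; last exact: meval0.
by rewrite mevalX prod_expr0n (negbTE ne_m0).
Qed.

Lemma vanish0_mcoeff0 e p : vanish0 e -> (e p)@_0%MM = 0.
Proof. by move=> e0; rewrite -meval0_mcoeff e0. Qed.

Lemma vf_decomp e : e = \sum_(p < n) \sum_(m <- msupp (e p)) (e p)@_m *: vfm m p.
Proof.
apply/ffunP => i; rewrite sum_ffunE (bigD1 i) //= [X in _ + X]big1 ?addr0 => [|p ne_pi].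
  rewrite sum_ffunE {1}(mpolyE (e i)); apply: eq_bigr => m _.
  by rewrite !ffunE eqxx.
by rewrite sum_ffunE big1 // => m _; rewrite !ffunE eq_sym (negbTE ne_pi) scaler0.
Qed.

End VectorFields.

Section SmashProduct.
Variables (F : fieldType) (n : nat) (S : algType F).
Variables (iA : {mpoly F[n]} -> S) (iV : VF F n -> S).
Hypothesis HS : is_smash_product iA iV.

Lemma smash_iA_hom : is_alg_hom iA.
Proof. by case: HS => [[]]. Qed.

Lemma smash_endo_id (h : S -> S) : is_alg_hom h ->
  (forall m, h (iA 'X_[m]) = iA 'X_[m]) ->
  (forall k p, h (iV (vfm k p)) = iV (vfm k p)) -> h =1 id.
Proof.
move=> h_hom h_iA h_iV; have [rel uniq] := HS; have [iA_hom iV_lin _ _] := rel.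
have h_lin := alg_hom_lin h_hom; have iA_lin := alg_hom_lin iA_hom.
apply: ((uniq S iA iV rel).2 h id h_hom (@alg_hom_id _ S)) => // [f|e].
  rewrite (mpolyE f) (is_lin_sum iA_lin) (is_lin_sum h_lin); apply: eq_bigr => m _.
  by rewrite (is_linZ iA_lin) (is_linZ h_lin) h_iA.
rewrite (vf_decomp e) (is_lin_sum iV_lin) (is_lin_sum h_lin); apply: eq_bigr => p _.
rewrite (is_lin_sum iV_lin) (is_lin_sum h_lin); apply: eq_bigr => m _.
by rewrite (is_linZ iV_lin) (is_linZ h_lin) h_iV.
Qed.

End SmashProduct.

Section WeylTensor.
Variables (F : fieldType) (n : nat) (T : algType F).
Variables (X P : 'I_n -> T) (jL : VF F n -> T).
Hypothesis HT : is_weyl_tensor_UL X P jL.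

Lemma weyl_tensor_endo_id (h : T -> T) : is_alg_hom h ->
  (forall i, h (X i) = X i) -> (forall i, h (P i) = P i) ->
  (forall m p, m != 0%MM -> h (jL (vfm m p)) = jL (vfm m p)) -> h =1 id.
Proof.
move=> h_hom h_X h_P h_jL; have [rel uniq] := HT; have [_ _ jL_lin _ _] := rel.
have h_lin := alg_hom_lin h_hom.
have v0 := @vanish0_0 F n.
have jL0 : jL 0 = 0 by have := jL_lin (-1) 0 0 v0 v0; rewrite scaler0 addr0 scaleN1r addNr.
pose Q e := vanish0 e /\ h (jL e) = jL e.
have Q_lin a e x : Q e -> Q x -> Q (a *: e + x).
  move=> [e0 he] [x0 hx]; split; first exact: vanish0_lin.
  by rewrite jL_lin // (is_linD h_lin) (is_linZ h_lin) he hx.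
have Q0 : Q 0 by split; [exact: v0 | rewrite jL0 (is_lin0 h_lin)].
have QD e x : Q e -> Q x -> Q (e + x) by move=> /(Q_lin 1) Q1 /Q1; rewrite scale1r.
apply: ((uniq T X P jL rel).2 h id h_hom (@alg_hom_id _ T)) => // e e0.
suff: Q e by case.
rewrite (vf_decomp e); apply: big_ind => // p _; apply: big_ind => // m _.
have [->|ne_m0] := eqVneq m 0%MM; first by rewrite vanish0_mcoeff0 // scale0r.
by rewrite -[_ *: _]addr0; apply: Q_lin => //; split; [exact: vanish0_vfm | exact: h_jL].
Qed.

End WeylTensor.

Section InverseMaps.
Variables (F : fieldType) (n : nat) (S T : algType F).
Variables (iA : {mpoly F[n]} -> S) (iV : VF F n -> S).
Variables (X P : 'I_n -> T) (jL : VF F n -> T) (phi : S -> T) (psi : T -> S).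
Hypotheses (iA_hom : is_alg_hom iA) (phi_hom : is_alg_hom phi) (psi_hom : is_alg_hom psi).
Hypothesis phiA : forall f, phi (iA f) = embA X f.
Hypothesis phiV : forall (k : 'X_{1..n}) (p : 'I_n),
  phi (iV (vfm k p)) =
    Xmon X k * P p +
    \sum_(m : 'X_{1..n < (mdeg k).+1} | ((m <= k)%MM && (bmnm m != 0%MM)))
       (mbin k m)%:R * (Xmon X (k - m)%MM * jL (vfm (bmnm m) p)).
Hypothesis psiD : forall r s : 'X_{1..n},
  psi (Xmon X r * Xmon P s) = iA 'X_[r] * Xmon (fun i => iV (vfm 0%MM i)) s.
Hypothesis psiL : forall (m : 'X_{1..n}) (p : 'I_n), m != 0%MM ->
  psi (jL (vfm m p)) =
    \sum_(k : 'X_{1..n < (mdeg m).+1} | (k <= m)%MM)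
       (((-1) ^+ mdeg (m - k)%MM * (mbin m k)%:R : F)
          *: (iA 'X_[(m - k)%MM] * iV (vfm (bmnm k) p))).

(* [vfT p m] is [1 (x) x^m d/dx_p] for [m != 0] and [d/dx_p (x) 1] for [m = 0];
   with this convention [phi] and [psi] act uniformly in [m]. *)
Definition vfT p m := if m == 0%MM then P p else jL (vfm m p).

Lemma vfT0 p : vfT p 0%MM = P p.
Proof. by rewrite /vfT eqxx. Qed.

Lemma vfT_vfm p m : m != 0%MM -> vfT p m = jL (vfm m p).
Proof. by rewrite /vfT => /negbTE->. Qed.

Lemma phi_iAX m : phi (iA 'X_[m]) = Xmon X m.
Proof. by rewrite phiA embA_X. Qed.

Lemma XmonD a b : Xmon X a * Xmon X b = Xmon X (a + b)%MM.
Proof. by rewrite -!phi_iAX -(alg_homM phi_hom) -(alg_homM iA_hom) mpolyXD. Qed.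

Lemma iAXD a b : iA 'X_[a] * iA 'X_[b] = iA 'X_[(a + b)%MM].
Proof. by rewrite -(alg_homM iA_hom) mpolyXD. Qed.

Lemma psi_Xmon m : psi (Xmon X m) = iA 'X_[m].
Proof. by have := psiD m 0%MM; rewrite !Xmon0 !mulr1. Qed.

Lemma psi_P p : psi (P p) = iV (vfm 0%MM p).
Proof.
have := psiD 0%MM U_(p)%MM.
by rewrite !Xmon0 !XmonU mul1r mpolyX0 (alg_hom1 iA_hom) mul1r.
Qed.

Lemma phi_vfm k p :
  phi (iV (vfm k p)) =
  \sum_(m : 'X_{1..n < (mdeg k).+1} | (m <= k)%MM)
     (mbin k m)%:R *: (Xmon X (k - m)%MM * vfT p m).
Proof.
rewrite phiV [RHS](bigD1 bm0) ?lem_0m //= mbin0 scale1r subm0 vfT0; congr (_ + _).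
apply: eq_big => [m|m /andP[_ ne_m0]]; first by rewrite -val_eqE.
by rewrite vfT_vfm // mulr_natl scaler_nat.
Qed.

Lemma psi_vfT m p :
  psi (vfT p m) =
  \sum_(j : 'X_{1..n < (mdeg m).+1} | (j <= m)%MM)
     ((-1) ^+ mdeg (m - j)%MM * (mbin m j)%:R) *: (iA 'X_[(m - j)%MM] * iV (vfm j p)).
Proof.
have [->|ne_m0] := eqVneq m 0%MM; last by rewrite vfT_vfm // psiL.
rewrite vfT0 psi_P (eq_bigr (fun j : 'X_{1..n < (mdeg 0%MM).+1} =>
  (bmnm j == 0%MM)%:R *: (iA 'X_[(0 - j)%MM] * iV (vfm j p)))) => [|j]; last first.
  by rewrite lem_m0 => /eqP ->; rewrite eqxx submm mdeg0 expr0 mul1r mbin0.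
rewrite (big_bmnm_le_delta (fun j => iA 'X_[(0 - j)%MM] * iV (vfm j p))) //.
by rewrite submm mpolyX0 (alg_hom1 iA_hom) mul1r.
Qed.

Lemma psi_phi_vfm k p : psi (phi (iV (vfm k p))) = iV (vfm k p).
Proof.
have psi_lin := alg_hom_lin psi_hom.
rewrite phi_vfm (is_lin_sum psi_lin).
under eq_bigr do rewrite (is_linZ psi_lin) (alg_homM psi_hom) psi_Xmon psi_vfT.
have iAX0 : iA 'X_[0%MM] = 1 by rewrite mpolyX0 (alg_hom1 iA_hom).
exact: (shifted_inversion (x := fun m => iA 'X_[m]) iAX0 iAXD (fun j => iV (vfm j p)) k
          (mnm_inverse_bin_signed F)).
Qed.

Lemma phi_psi_vfT m p : phi (psi (vfT p m)) = vfT p m.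
Proof.
have phi_lin := alg_hom_lin phi_hom.
rewrite psi_vfT (is_lin_sum phi_lin).
under eq_bigr do rewrite (is_linZ phi_lin) (alg_homM phi_hom) phi_iAX phi_vfm.
exact: (shifted_inversion (Xmon0 X) XmonD (vfT p) m (mnm_inverse_signed_bin F)).
Qed.

Lemma psi_phiK : is_smash_product iA iV -> forall s, psi (phi s) = s.
Proof.
move=> HS; apply: (smash_endo_id HS (alg_hom_comp phi_hom psi_hom)) => [m|k p] /=.
  by rewrite phi_iAX psi_Xmon.
exact: psi_phi_vfm.
Qed.

Lemma phi_psiK : is_weyl_tensor_UL X P jL -> forall t, phi (psi t) = t.
Proof.
move=> HT; apply: (weyl_tensor_endo_id HT (alg_hom_comp psi_hom phi_hom)) => /=
  [i|i|m p ne_m0].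
- by rewrite -{1}(XmonU X i) psi_Xmon phi_iAX XmonU.
- by rewrite -vfT0 phi_psi_vfT.
- by rewrite -vfT_vfm // phi_psi_vfT.
Qed.

End InverseMaps.

Theorem lemma3p5 (F : closedFieldType) (charF0 : [pchar F] =i pred0) (n : nat)
    (S : algType F) (iA : {mpoly F[n]} -> S) (iV : VF F n -> S)
    (T : algType F) (X P : 'I_n -> T) (jL : VF F n -> T)
    (HS : is_smash_product iA iV) (HT : is_weyl_tensor_UL X P jL)
    (phi : S -> T) (psi : T -> S)
    (Hphi : is_alg_hom phi) (Hpsi : is_alg_hom psi)
    (phiA : forall f, phi (iA f) = embA X f)
    (phiV : forall (k : 'X_{1..n}) (p : 'I_n),
       phi (iV (vfm k p)) =
         Xmon X k * P p +
         \sum_(m : 'X_{1..n < (mdeg k).+1} | ((m <= k)%MM && (bmnm m != 0%MM)))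
            (mbin k m)%:R * (Xmon X (k - m)%MM * jL (vfm (bmnm m) p)))
    (psiD : forall r s : 'X_{1..n},
       psi (Xmon X r * Xmon P s) = iA 'X_[r] * Xmon (fun i => iV (vfm 0%MM i)) s)
    (psiL : forall (m : 'X_{1..n}) (p : 'I_n), m != 0%MM ->
       psi (jL (vfm m p)) =
         \sum_(k : 'X_{1..n < (mdeg m).+1} | (k <= m)%MM)
            (((-1) ^+ mdeg (m - k)%MM * (mbin m k)%:R : F)
               *: (iA 'X_[(m - k)%MM] * iV (vfm (bmnm k) p)))) :
  (forall s, psi (phi s) = s) /\ (forall t, phi (psi t) = t).
Proof.
have iA_hom := smash_iA_hom HS.
split; first exact: (psi_phiK iA_hom Hphi Hpsi phiA phiV psiD psiL HS).
exact: (phi_psiK iA_hom Hphi Hpsi phiA phiV psiD psiL HT).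
Qed.
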